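(* Any pseudo $H$-type algebra $\mathfrak n=\mathfrak n_{-2}\oplus\mathfrak n_{-1}$ with $\dim\mathfrak n_{-2}\geq 3$ is rigid.
   Context: A graded 2-step nilpotent Lie algebra $\mathfrak n=\mathfrak n_{-2}\oplus\mathfrak n_{-1}$ has $[\mathfrak n_{-1},\mathfrak n_{-1}]=\mathfrak n_{-2}$ and $\mathfrak n_{-2}$ central. A real $M$-type algebra is such a real $\mathfrak n$ with a non-degenerate symmetric bilinear form $\langle\cdot,\cdot\rangle$ whose restriction to $\mathfrak n_{-2}$ is non-degenerate and with $\mathfrak n_{-2}\perp\mathfrak n_{-1}$. The $J$-map $J\colon\mathfrak n_{-2}\to\operatorname{End}(\mathfrak n_{-1})$ is defined by $\langle J_zx,y\rangle=\langle z,[x,y]\rangle$ for $x,y\in\mathfrak n_{-1}$, $z\in\mathfrak n_{-2}$. The algebra is of pseudo $H$-type if $J_{z}J_{w}+J_{w}J_{z}=-2\langle z,w\rangle\,\mathrm{Id}_{\mathfrak n_{-1}}$ for all $z,w\in\mathfrak n_{-2}$. The Tanaka prolongation of $\mathfrak n$ is the maximal graded Lie algebra $\hat{\mathfrak n}=\bigoplus_{i\ge -2}\hat{\mathfrak n}_i$ with negative part equal to $\mathfrak n$ such that for $k\ge0$ any $X\in\hat{\mathfrak n}_k$ with $[X,\mathfrak n_{-1}]=0$ is zero; $\mathfrak n$ is rigid if $\hat{\mathfrak n}$ is finite dimensional. *)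

From HB Require Import structures.
From mathcomp Require Import all_boot all_order all_algebra.
From mathcomp Require Import reals.
Unset Strict Implicit. Unset Printing Implicit Defensive.
Import Order.TTheory GRing.Theory Num.Theory.
Local Open Scope ring_scope.

(* Conventions.
   n_{-1} = 'rV[R]_m  (row vectors),  n_{-2} = 'rV[R]_q.
   The bracket [n_{-1}, n_{-1}] -> n_{-2} is  br : 'rV_m -> 'rV_m -> 'rV_q ;
   n_{-2} is central, so all other brackets in n vanish.
   The inner product on n = n_{-1} (+) n_{-2} with n_{-2} ⊥ n_{-1} is
   block-diagonal:  <(x,z),(x',z')> = x gV x'^T + z gZ z'^T. *)

Section Defs.
Variables (R : realType) (m q : nat).
Variable br : 'rV[R]_m -> 'rV[R]_m -> 'rV[R]_q.

Definition graded_2step : Prop :=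
  (forall (a : R) x x' y, br (a *: x + x') y = a *: br x y + br x' y) /\
  (forall x y, br x y = - br y x) /\
  (* [n_{-1}, n_{-1}] = n_{-2}: brackets span n_{-2} *)
  (forall z : 'rV[R]_q, exists s : seq (R * 'rV[R]_m * 'rV[R]_m),
      z = \sum_(p <- s) p.1.1 *: br p.1.2 p.2).

Variables (gV : 'M[R]_m) (gZ : 'M[R]_q).

Definition form_n : 'M[R]_(m + q) := block_mx gV 0 0 gZ.

Definition Mtype : Prop :=
  graded_2step /\ form_n^T = form_n /\ form_n \in unitmx /\ gZ \in unitmx.

Definition ipZ (z w : 'rV[R]_q) : R := (z *m gZ *m w^T) 0 0.

(* J_z, acting on row vectors by x |-> x *m Jmap z; it is the unique map with
   <J_z x, y> = <z, [x, y]> (gV invertible). *)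
Definition Jmap (z : 'rV[R]_q) : 'M[R]_m :=
  (\matrix_(i < m, j < m) ipZ z (br (delta_mx 0 i) (delta_mx 0 j))) *m invmx gV.

Definition pseudo_Htype : Prop :=
  Mtype /\
  forall z w : 'rV[R]_q,
    Jmap z *m Jmap w + Jmap w *m Jmap z = (- (2%:R * ipZ z w)) %:M.

(* ---------- Tanaka prolongation (standard inductive construction) ----------
   lvl n is the ambient space of the degree (n-2) component:
     lvl 0 = n_{-2},  lvl 1 = n_{-1},
     lvl (k+2) = Hom(n_{-1}, g_{k-1}) x Hom(n_{-2}, g_{k-2})  (as functions). *)
Fixpoint lvl (n : nat) : Type :=
  match n with
  | 0 => 'rV[R]_q
  | S p => match p with
           | 0 => 'rV[R]_m
           | S k => (('rV[R]_m -> lvl p) * ('rV[R]_q -> lvl k))%type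
           end
  end.

Fixpoint lzero2 (n : nat) : lvl n * lvl n.+1 :=
  match n return lvl n * lvl n.+1 with
  | 0 => (0, 0)
  | S k => let r := lzero2 k in
           (r.2, ((fun _ => r.2), (fun _ => r.1)) : lvl k.+2)
  end.
Definition lzero (n : nat) : lvl n := (lzero2 n).1.

Fixpoint ladd2 (n : nat) :
    (lvl n -> lvl n -> lvl n) * (lvl n.+1 -> lvl n.+1 -> lvl n.+1) :=
  match n return (lvl n -> lvl n -> lvl n) * (lvl n.+1 -> lvl n.+1 -> lvl n.+1) with
  | 0 => (fun u v => u + v, fun u v => u + v)
  | S k => let r := ladd2 k in
           (r.2, fun (u v : lvl k.+2) =>
              ((fun x => r.2 (u.1 x) (v.1 x)), (fun z => r.1 (u.2 z) (v.2 z))) : lvl k.+2)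
  end.
Definition ladd (n : nat) : lvl n -> lvl n -> lvl n := (ladd2 n).1.

Fixpoint lscale2 (n : nat) (a : R) : (lvl n -> lvl n) * (lvl n.+1 -> lvl n.+1) :=
  match n return (lvl n -> lvl n) * (lvl n.+1 -> lvl n.+1) with
  | 0 => (fun u => a *: u, fun u => a *: u)
  | S k => let r := lscale2 k a in
           (r.2, fun (u : lvl k.+2) =>
              ((fun x => r.2 (u.1 x)), (fun z => r.1 (u.2 z))) : lvl k.+2)
  end.
Definition lscale (n : nat) (a : R) : lvl n -> lvl n := (lscale2 n a).1.

Definition lopp (n : nat) (u : lvl n) : lvl n := lscale n (-1) u.

(* bracket [w, y] of w in g_{n-1} with y in n_{-1}, landing in g_{n-2} *)
Definition bV (n : nat) : lvl n.+1 -> 'rV[R]_m -> lvl n :=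
  match n return lvl n.+1 -> 'rV[R]_m -> lvl n with
  | 0 => fun w y => br w y
  | S k => fun w y => w.1 y
  end.

Definition linV (n : nat) (f : 'rV[R]_m -> lvl n) : Prop :=
  forall (a : R) x y, f (a *: x + y) = ladd n (lscale n a (f x)) (f y).
Definition linZ (n : nat) (f : 'rV[R]_q -> lvl n) : Prop :=
  forall (a : R) x y, f (a *: x + y) = ladd n (lscale n a (f x)) (f y).

(* derivation rule  u[x,y] = [u x, y] + [x, u y]  for u of degree k >= 0 *)
Definition derVV (k : nat) (u : lvl k.+2) : Prop :=
  forall x y : 'rV[R]_m,
    u.2 (br x y) = ladd k (bV k (u.1 x) y) (lopp k (bV k (u.1 y) x)).
(* x in n_{-1}, z in n_{-2}  (u[x,z] = 0); trivial in degree 0 *)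
Definition derVZ (k : nat) : lvl k.+2 -> Prop :=
  match k return lvl k.+2 -> Prop with
  | 0 => fun _ => True
  | S j => fun u => forall x z, (u.1 x).2 z = bV j (u.2 z) x
  end.
(* z, z' in n_{-2}  (u[z,z'] = 0); trivial in degrees 0, 1 *)
Definition derZZ (k : nat) : lvl k.+2 -> Prop :=
  match k return lvl k.+2 -> Prop with
  | 0 => fun _ => True
  | 1 => fun _ => True
  | S (S j) => fun u => forall z z', (u.2 z).2 z' = (u.2 z').2 z
  end.

(* membership in the Tanaka prolongation: inP (k+2) u  <->  u in g_k;
   defined by simultaneous recursion on (n, n+1) *)
Definition inStep (k : nat) (P : lvl k -> Prop) (Q : lvl k.+1 -> Prop)
    (u : lvl k.+2) : Prop :=
  [/\ linV k.+1 u.1, linZ k u.2,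
      (forall x, Q (u.1 x)), (forall z, P (u.2 z)) &
      [/\ derVV k u, derVZ k u & derZZ k u]].

Fixpoint inP2 (n : nat) : (lvl n -> Prop) * (lvl n.+1 -> Prop) :=
  match n return (lvl n -> Prop) * (lvl n.+1 -> Prop) with
  | 0 => (fun _ => True, fun _ => True)
  | S k => let r := inP2 k in (r.2, inStep k r.1 r.2)
  end.
Definition inP (n : nat) : lvl n -> Prop := (inP2 n).1.

Definition tanaka (k : nat) : lvl k.+2 -> Prop := inP k.+2.

(* rigid: the prolongation is finite dimensional, i.e. (each g_k being finite
   dimensional) only finitely many components g_k are nonzero. *)
Definition rigid : Prop :=
  exists N : nat, forall k : nat, (N <= k)%N ->
    forall u : lvl k.+2, tanaka k u -> u = lzero k.+2.

End Defs.

(* Since dim n_{-2} >= 3 and the form on n_{-2} is nondegenerate, n_{-2} contains pairwise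
   orthogonal anisotropic vectors e1, e2, e3.  The J-maps satisfy the Clifford relations, so
   J_{e1} J_{e2} J_{e3} is invertible, J_z and J_w anticommute when z is orthogonal to w, and
   [y, y J_z] = <y, y> z.  Pairing the derivation identities of an element w of g_1 with these
   relations shows that w acts on n_{-2} as z |-> v J_z for a single v in n_{-1}, and that w = 0
   as soon as it kills n_{-2}: then <[[w, a], b], c J_{e1} J_{e2} J_{e3}> is symmetric in (a, b)
   and skew in (b, c).  For an element of g_3 the vectors v attached to its components in g_1
   form a symmetric family v_z J_{z'} = v_{z'} J_z, which must vanish; descending through g_1
   and g_2 gives g_3 = 0.  Finally an element of g_{k+1} acts on n_{-1} through g_k, hence on
   n_{-2} = [n_{-1}, n_{-1}], so g_k = 0 forces g_{k+1} = 0. *)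

From HB Require Import structures.
From mathcomp Require Import all_boot all_order all_algebra.
From mathcomp Require Import boolp reals sesquilinear ring lra.
Import GRing.Theory Num.Theory.
Set Implicit Arguments.
Unset Strict Implicit.
Unset Printing Implicit Defensive.
Local Open Scope ring_scope.

Section SymmetricForms.
Variables (F : fieldType) (n : nat) (G : 'M[F]_n).
Hypotheses (G_sym : G^T = G) (G_unit : G \in unitmx) (two_neq0 : 2%:R != 0 :> F).
Local Notation "''[' u , v ]" := (form idfun G u v).

Lemma form_suml I (r : seq I) (P : pred I) (s : I -> 'rV_n) w :
  '[\sum_(i <- r | P i) s i, w] = \sum_(i <- r | P i) '[s i, w].
Proof. by apply: (big_morph (fun u => '[u, w])) => [u v|]; rewrite ?formDl ?form0l. Qed.

Lemma form_sumr I (r : seq I) (P : pred I) (s : I -> 'rV_n) u :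
  '[u, \sum_(i <- r | P i) s i] = \sum_(i <- r | P i) '[u, s i].
Proof. by apply: (big_morph (fun w => '[u, w])) => [v w|]; rewrite ?formDr ?form0r. Qed.

Lemma form_injl u u' : (forall w, '[u, w] = '[u', w]) -> u = u'.
Proof.
move=> eq_uu'; rewrite -(mulmxK G_unit u) -(mulmxK G_unit u').
congr (_ *m _); apply/rowP => j.
by have := eq_uu' (delta_mx 0 j); rewrite /form map_mx_id // trmx_delta -!colE !mxE.
Qed.

Lemma form_sym u v : '[u, v] = '[v, u].
Proof.
rewrite /form !map_mx_id // -!trace_mx11 -mxtrace_tr.
by rewrite !trmx_mul trmxK G_sym mulmxA.
Qed.

Lemma form_injr v v' : (forall w, '[w, v] = '[w, v']) -> v = v'.
Proof. by move=> eq_vv'; apply: form_injl => w; rewrite !(form_sym _ w). Qed.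

Lemma form_isotropic_orth u v :
  '[u, u] = 0 -> '[v, v] = 0 -> '[u + v, u + v] = 0 -> '[u, v] = 0.
Proof.
move=> uu vv; rewrite formDl !formDr uu vv add0r addr0 (form_sym v u) -mulr2n.
by move/eqP; rewrite -mulr_natr mulf_eq0 (negbTE two_neq0) orbF => /eqP.
Qed.

Lemma exists_anisotropic_orth k (s : 'I_k -> 'rV_n) : (k < n)%N ->
  (forall i, '[s i, s i] != 0) -> (forall i j, i != j -> '[s i, s j] = 0) ->
  exists t, '[t, t] != 0 /\ forall i, '[t, s i] = 0.
Proof.
move=> lt_kn s_aniso s_orth; apply: contrapT => no_t.
(* Otherwise polarization makes the form vanish on the orthogonal of the s i, so the
   projection P x of any x onto it is 0 and the s i span. *)
pose c x i := '[x, s i] / '[s i, s i].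
pose P x := x - \sum_i c x i *: s i.
have P_orth x i : '[P x, s i] = 0.
  rewrite formDl formNl form_suml (bigD1 i) //= big1 => [|j ji]; last first.
    by rewrite formZl s_orth ?mulr0 // eq_sym.
  by rewrite formZl addr0 /c mulfVK ?subrr.
have orth_iso t : (forall i, '[t, s i] = 0) -> '[t, t] = 0.
  by move=> t_orth; apply/eqP/negPn/negP => t_aniso; apply: no_t; exists t.
have P_iso x y : '[P x, P y] = 0.
  apply: form_isotropic_orth; apply: orth_iso => i.
  - exact: P_orth.
  - exact: P_orth.
  - by rewrite formDl !P_orth addr0.
have P0 x : P x = 0.
  apply: form_injl => y; rewrite form0l.
  rewrite -[y](subrK (\sum_i c y i *: s i)) formDr P_iso form_sumr add0r.
  by rewrite big1 // => i _; rewrite formZr P_orth mulr0.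
suff : row_full (\matrix_(i < k) s i).
  by rewrite -col_leq_rank => /leq_trans/(_ (rank_leq_row _)); rewrite leqNgt lt_kn.
rewrite -sub1mx; apply/rV_subP => x _; apply/submxP; exists (\row_i c x i).
have /eqP := P0 x; rewrite subr_eq0 => /eqP {1}->.
by rewrite mulmx_sum_row; apply: eq_bigr => i _; rewrite rowK mxE.
Qed.

Lemma exists_orthogonal_family k : (k <= n)%N ->
  exists s : 'I_k -> 'rV_n,
    (forall i, '[s i, s i] != 0) /\ (forall i j, i != j -> '[s i, s j] = 0).
Proof.
elim: k => [|k IHk] lt_kn.
  by exists (fun _ => 0); split => -[].
have [s [s_aniso s_orth]] := IHk (ltnW lt_kn).
have [t [t_aniso t_orth]] := exists_anisotropic_orth lt_kn s_aniso s_orth.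
exists (fun i => if unlift ord_max i is Some j then s j else t); split.
  by move=> i; case: unliftP.
move=> i j; case: unliftP => [i' ->|->]; case: unliftP => [j' ->|->] //.
- by rewrite (inj_eq lift_inj) => /s_orth.
- by rewrite form_sym.
- by rewrite eqxx.
Qed.

Lemma exists_anisotropic_shift s z : '[s, s] != 0 ->
  exists l, '[l *: s + z, l *: s + z] != 0.
Proof.
move=> s_aniso; pose p l := '[l *: s + z, l *: s + z].
have pE l : p l = l ^+ 2 * '[s, s] + 2%:R * l * '[s, z] + '[z, z].
  by rewrite /p formDl !formDr !formZl !formZr /= (form_sym z s); ring.
have [p1|] := eqVneq (p 1) 0; last by exists 1.
have [p2|] := eqVneq (p 2%:R) 0; last by exists 2%:R.
(* p 3 - 2 p 2 + p 1 = 2 '[s, s] *)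
exists 3%:R; rewrite -/(p _) (_ : p _ = 2%:R * '[s, s] + 2%:R * p 2%:R - p 1).
  by rewrite p1 p2 mulr0 addr0 subr0 mulf_neq0.
by rewrite !pE; ring.
Qed.

End SymmetricForms.

Lemma ipZ_form (R : realType) n (G : 'M[R]_n) u v : ipZ R n G u v = form idfun G u v.
Proof. by rewrite /form map_mx_id. Qed.

Section LevelZero.
Variables (R : realType) (m q : nat).

Lemma lzero2_absorbs n (a : R) :
  [/\ (lscale2 R m q n a).1 (lzero2 R m q n).1 = (lzero2 R m q n).1,
      (lscale2 R m q n a).2 (lzero2 R m q n).2 = (lzero2 R m q n).2,
      (ladd2 R m q n).1 (lzero2 R m q n).1 (lzero2 R m q n).1 = (lzero2 R m q n).1 &
      (ladd2 R m q n).2 (lzero2 R m q n).2 (lzero2 R m q n).2 = (lzero2 R m q n).2].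
Proof.
elim: n => [|n [IH1 IH2 IH3 IH4]] /=; first by rewrite !scaler0 !addr0.
by split=> //; congr pair; apply: funext => ?; rewrite ?IH1 ?IH2 ?IH3 ?IH4.
Qed.

Lemma lscale_lzero n (a : R) : lscale R m q n a (lzero R m q n) = lzero R m q n.
Proof. by case: (lzero2_absorbs n a). Qed.

Lemma ladd_lzero n : ladd R m q n (lzero R m q n) (lzero R m q n) = lzero R m q n.
Proof. by case: (lzero2_absorbs n 0). Qed.

End LevelZero.

Definition tanaka_vanishes (R : realType) (m q : nat)
    (br : 'rV[R]_m -> 'rV[R]_m -> 'rV[R]_q) (k : nat) : Prop :=
  forall u : lvl R m q k.+2, tanaka R m q br k u -> u = lzero R m q k.+2.

Section GradedBracket.
Variables (R : realType) (m q : nat) (br : 'rV[R]_m -> 'rV[R]_m -> 'rV[R]_q).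
Hypothesis br_graded : graded_2step R m q br.

Lemma br_linear y : linear (br ^~ y).
Proof. by case: br_graded => br_lin _ a x x'; apply: br_lin. Qed.

Lemma br_anti x y : br x y = - br y x.
Proof. by case: br_graded => _ [br_anti _]; apply: br_anti. Qed.

Lemma br_spanning z : exists s : seq (R * 'rV[R]_m * 'rV[R]_m),
  z = \sum_(p <- s) p.1.1 *: br p.1.2 p.2.
Proof. by case: br_graded => _ [_ br_span]; apply: br_span. Qed.

Lemma brZl a x y : br (a *: x) y = a *: br x y.
Proof. exact: scalable_linear (br_linear y) a x. Qed.

Lemma br0l y : br 0 y = 0.
Proof. by have := brZl 0 0 y; rewrite !scale0r. Qed.

Lemma brDl x x' y : br (x + x') y = br x y + br x' y.
Proof. by have := br_linear y 1 x x'; rewrite !scale1r. Qed.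

Lemma br_suml I (r : seq I) (P : pred I) (s : I -> 'rV_m) y :
  br (\sum_(i <- r | P i) s i) y = \sum_(i <- r | P i) br (s i) y.
Proof. by apply: (big_morph (br ^~ y)) => [x x'|]; rewrite ?brDl ?br0l. Qed.

Lemma br_sumr I (r : seq I) (P : pred I) (s : I -> 'rV_m) x :
  br x (\sum_(i <- r | P i) s i) = \sum_(i <- r | P i) br x (s i).
Proof.
by rewrite br_anti br_suml -sumrN; apply: eq_bigr => i _; rewrite -br_anti.
Qed.

Lemma brZr a x y : br x (a *: y) = a *: br x y.
Proof. by rewrite br_anti brZl -scalerN -br_anti. Qed.

Lemma dim_n1_gt0 (z : 'rV[R]_q) : z != 0 -> (0 < m)%N.
Proof.
apply: contraNT; rewrite -eqn0Ngt => /eqP m0.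
have flat (x : 'rV[R]_m) : x = 0.
  by apply/rowP => -[i lt_im]; exfalso; move: lt_im; rewrite m0.
have [s ->] := br_spanning z.
by apply/eqP; rewrite big1 // => p _; rewrite (flat p.1.2) br0l scaler0.
Qed.

Lemma linZ_eq0_of_br n (g : 'rV[R]_q -> lvl R m q n) : linZ R m q n g ->
  (forall x y, g (br x y) = lzero R m q n) -> forall z, g z = lzero R m q n.
Proof.
move=> g_lin g_br z; have [s ->] := br_spanning z.
elim: s => [|p s IHs]; first by rewrite big_nil -(br0l 0) g_br.
by rewrite big_cons g_lin g_br IHs lscale_lzero ladd_lzero.
Qed.

Lemma tanaka_vanishes_succ k : tanaka_vanishes br k -> tanaka_vanishes br k.+1.
Proof.
move=> IH [u1 u2] [_ u2_lin u1_in _ [u_VV _ _]].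
have u1_0 x : u1 x = lzero R m q k.+2 by apply: IH; apply: u1_in.
have u2_0 : forall z, u2 z = lzero R m q k.+1.
  apply: linZ_eq0_of_br u2_lin _ => x y; rewrite u_VV /= !u1_0.
  by rewrite /lopp lscale_lzero ladd_lzero.
by congr pair; apply: funext => ?; rewrite ?u1_0 ?u2_0.
Qed.

End GradedBracket.

Section PseudoHType.
Variables (R : realType) (m q : nat) (br : 'rV[R]_m -> 'rV[R]_m -> 'rV[R]_q).
Variables (gV : 'M[R]_m) (gZ : 'M[R]_q).
Hypothesis HH : pseudo_Htype R m q br gV gZ.

Local Notation "''[' x , y ]_V" := (form idfun gV x y).
Local Notation "''[' z , w ]_Z" := (form idfun gZ z w).
Local Notation J := (Jmap R m q br gV gZ).

Let two_neq0 : 2%:R != 0 :> R. Proof. by rewrite pnatr_eq0. Qed.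

Lemma pseudo_Htype_graded : graded_2step R m q br.
Proof. by case: HH => [[]]. Qed.

Let br_graded := pseudo_Htype_graded.

Lemma gV_sym : gV^T = gV.
Proof. by case: HH => [[_ [+ _]] _]; rewrite /form_n tr_block_mx => /eq_block_mx[]. Qed.

Lemma gZ_sym : gZ^T = gZ.
Proof. by case: HH => [[_ [+ _]] _]; rewrite /form_n tr_block_mx => /eq_block_mx[]. Qed.

Lemma gV_unit : gV \in unitmx.
Proof.
by case: HH => [[_ [_ [+ _]]] _]; rewrite /form_n !unitmxE det_ublock unitrM => /andP[].
Qed.

Lemma gZ_unit : gZ \in unitmx.
Proof. by case: HH => [[_ [_ []]] _]. Qed.

Lemma Jmap_clifford z w : J z *m J w + J w *m J z = (- (2%:R * '[z, w]_Z))%:M.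
Proof. by case: HH => _; rewrite -ipZ_form. Qed.

Lemma Jmap_adj z x y : '[x *m J z, y]_V = '[z, br x y]_Z.
Proof.
rewrite /Jmap; set M := \matrix_(i, j) _.
have -> : '[x *m (M *m invmx gV), y]_V = form idfun M x y.
  by rewrite /form !mulmxA mulmxKV ?gV_unit.
rewrite [x]row_sum_delta [y]row_sum_delta (br_suml br_graded) form_suml form_sumr.
apply: eq_bigr => i _; rewrite formZl (brZl br_graded) formZr /= (br_sumr br_graded).
rewrite !form_sumr !mulr_sumr.
by apply: eq_bigr => j _; rewrite formZr (brZr br_graded) formZr /= formee mxE ipZ_form.
Qed.

Lemma JmapD a z z' : J (a *: z + z') = a *: J z + J z'.
Proof.
rewrite /Jmap scalemxAl -mulmxDl; congr (_ *m _).
by apply/matrixP => i j; rewrite !mxE !ipZ_form formDl formZl.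
Qed.

Lemma Jmap_sqr z : J z *m J z = (- '[z, z]_Z)%:M.
Proof.
have := Jmap_clifford z z; rewrite -mulr2n -scaler_nat => /(congr1 ( *:%R 2%:R^-1)).
by rewrite scalerA mulVf // scale1r scale_scalar_mx mulrN mulKf.
Qed.

Lemma mulmx_Jmap_sqr (x : 'rV[R]_m) z : x *m J z *m J z = - '[z, z]_Z *: x.
Proof. by rewrite -mulmxA Jmap_sqr mul_mx_scalar. Qed.

Lemma mulmx_Jmap_anticomm (x : 'rV[R]_m) z w : '[z, w]_Z = 0 ->
  x *m J z *m J w = - (x *m J w *m J z).
Proof.
move=> zw; have /eqP := Jmap_clifford z w.
rewrite zw mulr0 oppr0 raddf0 addr_eq0 => /eqP anticomm.
by rewrite -[LHS]mulmxA anticomm mulmxN mulmxA.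
Qed.

Lemma Jmap_skew z x y : '[x *m J z, y]_V = - '[x, y *m J z]_V.
Proof. by rewrite Jmap_adj (br_anti br_graded) formNr -Jmap_adj (form_sym gV_sym). Qed.

Lemma Jmap_isometry z x y : '[x *m J z, y *m J z]_V = '[z, z]_Z * '[x, y]_V.
Proof. by rewrite Jmap_skew mulmx_Jmap_sqr formZr /= mulNr opprK. Qed.

Lemma br_Jmap y z : br y (y *m J z) = '[y, y]_V *: z.
Proof.
apply: (form_injr gZ_sym gZ_unit) => w; rewrite -Jmap_adj formZr /=.
have twice : '[y *m J w, y *m J z]_V + '[y *m J w, y *m J z]_V =
             - '[y, y *m (J z *m J w + J w *m J z)]_V.
  rewrite {1}Jmap_skew (form_sym gV_sym (y *m J w)) Jmap_skew -opprD -formDr.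
  by rewrite -[y *m J z *m _]mulmxA -[y *m J w *m _]mulmxA -mulmxDr.
move: twice; rewrite Jmap_clifford mul_mx_scalar formZr /= (form_sym gZ_sym z w).
lra.
Qed.

Lemma exists_anisotropic_n1 z : '[z, z]_Z != 0 -> exists y, '[y, y]_V != 0.
Proof.
move=> z_aniso; have z_neq0 : z != 0 by apply: contraNneq z_aniso => ->; rewrite form0l.
have m_gt0 := dim_n1_gt0 br_graded z_neq0.
have [s [s_aniso _]] := exists_orthogonal_family gV_sym gV_unit two_neq0 m_gt0.
by exists (s ord0).
Qed.

Lemma exists_orthogonal_triple : (3 <= q)%N ->
  exists e1 e2 e3, [/\ '[e1, e1]_Z != 0, '[e2, e2]_Z != 0, '[e3, e3]_Z != 0 &
                      [/\ '[e1, e2]_Z = 0, '[e1, e3]_Z = 0 & '[e2, e3]_Z = 0]].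
Proof.
move=> q_ge3; have [s [s_aniso s_orth]] := exists_orthogonal_family gZ_sym gZ_unit two_neq0 q_ge3.
by exists (s 0%R), (s 1%R), (s 2%:R); split; rewrite ?s_aniso ?s_orth.
Qed.

Lemma mulmx_Jmap3K (x : 'rV[R]_m) a b c :
  x *m J a *m J b *m J c *m J c *m J b *m J a = - ('[a, a]_Z * '[b, b]_Z * '[c, c]_Z) *: x.
Proof.
rewrite mulmx_Jmap_sqr -scalemxAl mulmx_Jmap_sqr -!scalemxAl mulmx_Jmap_sqr !scalerA.
by congr (_ *: _); ring.
Qed.

Section OrthogonalTriple.
Variables e1 e2 e3 : 'rV[R]_q.
Hypotheses (e1_aniso : '[e1, e1]_Z != 0) (e2_aniso : '[e2, e2]_Z != 0).
Hypotheses (e3_aniso : '[e3, e3]_Z != 0).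
Hypotheses (e12 : '[e1, e2]_Z = 0) (e13 : '[e1, e3]_Z = 0) (e23 : '[e2, e3]_Z = 0).

Let e21 : '[e2, e1]_Z = 0. Proof. by rewrite (form_sym gZ_sym). Qed.
Let e31 : '[e3, e1]_Z = 0. Proof. by rewrite (form_sym gZ_sym). Qed.
Let e32 : '[e3, e2]_Z = 0. Proof. by rewrite (form_sym gZ_sym). Qed.

Lemma Jmap3_eq0 (x : 'rV[R]_m) : x *m J e1 *m J e2 *m J e3 = 0 -> x = 0.
Proof.
move=> x0; have /esym/eqP := mulmx_Jmap3K x e1 e2 e3; rewrite x0 !mul0mx.
by rewrite scaler_eq0 oppr_eq0 !mulf_eq0 (negbTE e1_aniso) (negbTE e2_aniso)
  (negbTE e3_aniso) => /eqP.
Qed.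

Lemma symmetric_Jmap_family_eq0 (Psi : 'rV[R]_q -> 'rV[R]_q -> 'rV[R]_m)
    (v : 'rV[R]_q -> 'rV[R]_m) :
  (forall a z, Psi a z = v a *m J z) -> (forall a z, Psi a z = Psi z a) ->
  forall a z, Psi a z = 0.
Proof.
move=> PsiE Psi_sym; set c := '[e1, e1]_Z.
have v_sym a z : v a *m J z = v z *m J a by rewrite -!PsiE.
have v_J1 z : v z = - c^-1 *: (v e1 *m J z *m J e1).
  by rewrite -v_sym mulmx_Jmap_sqr scalerA mulrNN mulVf // scale1r.
suff v_e1 : v e1 = 0 by move=> a z; rewrite PsiE v_J1 v_e1 !mul0mx scaler0 mul0mx.
apply: Jmap3_eq0; have := v_sym e2 e3; rewrite (v_J1 e2) (v_J1 e3) -!scalemxAl.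
move/(scalerI _); rewrite oppr_eq0 invr_eq0 => /(_ e1_aniso).
rewrite (mulmx_Jmap_anticomm (v e1) e21) mulNmx (mulmx_Jmap_anticomm (v e1) e31).
rewrite mulNmx (mulmx_Jmap_anticomm (v e1 *m J e1) e32) opprK => /eqP.
rewrite -subr_eq0 -opprD oppr_eq0 -mulr2n -scaler_nat scaler_eq0 (negbTE two_neq0).
by move/eqP.
Qed.

Lemma sym_bracket_map_eq0 (B : 'rV[R]_m -> 'rV[R]_m -> 'rV[R]_m) :
  (forall x y, B x y = B y x) ->
  (forall x y y', br (B x y) y' = br (B x y') y) -> forall x y, B x y = 0.
Proof.
move=> B_sym B_br; pose D a b c : R := '[B a b, c]_V.
have D_J z a b c : D a b (c *m J z) = D a c (b *m J z).
  by have := congr1 (form idfun gZ z) (B_br a b c); rewrite -!Jmap_adj !Jmap_skew => /oppr_inj.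
pose K (u : 'rV_m) := u *m J e1 *m J e2 *m J e3.
have D_K a b c : D a b (K c) = - D a c (K b).
  (* w J_{e2} = b J_{e3} lets D_J carry J_{e2}, and then J_{e1}, across. *)
  set c2 := '[e2, e2]_Z; pose w : 'rV[R]_m := - c2^-1 *: (b *m J e3 *m J e2).
  have wJ2 : w *m J e2 = b *m J e3.
    by rewrite -scalemxAl mulmx_Jmap_sqr scalerA mulrNN mulVf // scale1r.
  rewrite /K D_J -wJ2 D_J mulmx_Jmap_sqr /D formZr -/(D a w _) D_J -scalemxAl /D formZr /=.
  rewrite mulrA mulrNN mulfV // mul1r (mulmx_Jmap_anticomm b e32) mulNmx.
  rewrite (mulmx_Jmap_anticomm (b *m J e2) e31) (mulmx_Jmap_anticomm b e21).
  by rewrite mulNmx opprK formNr.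
(* D a b (K c) is symmetric in (a, b) and skew in (b, c). *)
have D_K0 a b c : D a b (K c) = 0.
  have D_symK x y z : D x y (K z) = D y x (K z) by rewrite /D B_sym.
  have := D_K a b c; have := D_K c a b; have := D_K b c a.
  have := D_symK a c b; have := D_symK c b a; have := D_symK b a c.
  lra.
move=> x y; apply: (form_injl gV_unit) => w; rewrite form0l.
have := mulmx_Jmap3K w e3 e2 e1; rewrite -[_ *m J e2 *m J e3]/(K (w *m J e3 *m J e2 *m J e1)).
move/(congr1 (D x y)); rewrite D_K0 /D formZr /= => /esym/eqP.
rewrite mulf_eq0 oppr_eq0 !mulf_eq0 (negbTE e1_aniso) (negbTE e2_aniso) (negbTE e3_aniso).
by move/eqP.
Qed.

(* For w in g_1: f z = [w, z] and B x y = [[w, x], y]. *)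
Section CenterAction.
Variables (f : 'rV[R]_q -> 'rV[R]_m) (B : 'rV[R]_m -> 'rV[R]_m -> 'rV[R]_m).
Hypotheses (f_lin : linear f) (B_lin : forall x, linear (B x)).
Hypothesis f_br : forall x y y', br (f (br y y')) x = br (B x y) y' - br (B x y') y.

Lemma center_action_pairing x z y :
  '[y, y]_V * '[z, br (f z) x]_Z =
  '[z, z]_Z * '[B x y, y]_V + '[B x (y *m J z), y *m J z]_V.
Proof.
have := congr1 (form idfun gZ z) (f_br x y (y *m J z)).
rewrite br_Jmap (scalable_linear f_lin) (brZl br_graded) formZr /= => ->.
by rewrite formDr formNr -!Jmap_adj Jmap_isometry Jmap_skew opprK.
Qed.

Lemma center_action_orth z z' : '[z, z']_Z = 0 ->
  '[z', z']_Z *: (f z *m J z) = '[z, z]_Z *: (f z' *m J z').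
Proof.
move=> zz'; apply: (form_injl gV_unit) => x; rewrite !formZl !Jmap_adj.
have [y y_aniso] := exists_anisotropic_n1 e1_aniso.
have quadN u : '[B x (- u), - u]_V = '[B x u, u]_V.
  by rewrite -scaleN1r (scalable_linear (B_lin x)) formZl formZr /= mulrA mulrNN !mul1r.
have E1 := center_action_pairing x z y.
have E2 := center_action_pairing x z' y.
have E3 := center_action_pairing x z' (y *m J z).
have E4 := center_action_pairing x z (y *m J z').
rewrite Jmap_isometry in E3; rewrite Jmap_isometry in E4.
(* y J_z J_z' = - y J_z' J_z makes E3 and E4 share their last term. *)
rewrite (mulmx_Jmap_anticomm y zz') quadN in E3.
move: E1 E2 E3 E4.
set a := '[z, br (f z) x]_Z; set a' := '[z', br (f z') x]_Z.
set n := '[y, y]_V; set c := '[z, z]_Z; set c' := '[z', z']_Z.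
move=> E1 E2 E3 E4; have : 2%:R * n * (c' * a - c * a') = 0 by nra.
by move/eqP; rewrite !mulf_eq0 (negbTE two_neq0) (negbTE y_aniso) subr_eq0 => /eqP.
Qed.

Lemma center_action_aniso e z : '[e, e]_Z != 0 -> '[z, z]_Z != 0 -> '[z, e]_Z = 0 ->
  f z = (- '[e, e]_Z^-1 *: (f e *m J e)) *m J z.
Proof.
move=> e_aniso z_aniso ze.
have -> : f z = - '[z, z]_Z^-1 *: (f z *m J z *m J z).
  by rewrite mulmx_Jmap_sqr scalerA mulrNN mulVf // scale1r.
have -> : f z *m J z = ('[e, e]_Z^-1 * '[z, z]_Z) *: (f e *m J e).
  by rewrite -scalerA -(center_action_orth ze) scalerA mulVf // scale1r.
by rewrite -!scalemxAl scalerA mulNr mulrCA mulVf // mulr1.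
Qed.

Lemma center_action_Jmap z : f z = (- '[e1, e1]_Z^-1 *: (f e1 *m J e1)) *m J z.
Proof.
set v := - '[e1, e1]_Z^-1 *: (f e1 *m J e1).
have f_e1 : f e1 = v *m J e1.
  by rewrite -scalemxAl mulmx_Jmap_sqr scalerA mulrNN mulVf // scale1r.
have f_e2 : f e2 = v *m J e2 := center_action_aniso e1_aniso e2_aniso e21.
have f_orth u : '[u, e1]_Z = 0 -> f u = v *m J u.
  move=> ue1; have [l l_aniso] := exists_anisotropic_shift gZ_sym two_neq0 u e2_aniso.
  have := center_action_aniso e1_aniso l_aniso.
  rewrite formDl formZl e21 ue1 mulr0 addr0 => /(_ erefl).
  by rewrite f_lin JmapD mulmxDr -scalemxAr f_e2 => /addrI.
pose c := '[z, e1]_Z / '[e1, e1]_Z.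
rewrite -(subrK (c *: e1) z) addrC f_lin JmapD mulmxDr -scalemxAr f_e1 f_orth //.
by rewrite formDl formNl formZl /c mulfVK // subrr.
Qed.

End CenterAction.

Lemma tanaka1_eq0 w : tanaka R m q br 1 w -> (forall z, w.2 z = 0) ->
  w = lzero R m q 3.
Proof.
move: w => [w1 w2] [_ _ w1_in _ [w_VV w_VZ _]] /= w2_0.
(* B x y = [[w, x], y], symmetric because w kills [x, y]. *)
pose B x y := (w1 x).1 y.
have B_sym x y : B x y = B y x.
  have := w_VV x y; rewrite /= w2_0 /lopp /lscale /ladd /= scaleN1r => /eqP.
  by rewrite eq_sym subr_eq0 => /eqP.
have B_br x y y' : br (B x y) y' = br (B x y') y.
  have [_ _ _ _ [wx_VV _ _]] := w1_in x.
  have := wx_VV y y'; rewrite /= /lopp /lscale /ladd /= scaleN1r.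
  have := w_VZ x (br y y'); rewrite /= w2_0 (br0l br_graded) => -> /eqP.
  by rewrite eq_sym subr_eq0 => /eqP.
have B0 := sym_bracket_map_eq0 B_sym B_br.
congr pair; apply: funext => x; last by rewrite w2_0.
have := w_VZ x; move: (B0 x); rewrite /B /=.
case: (w1 x) => f1 f2 /= f1_0 f2_VZ.
by congr pair; apply: funext => y; rewrite ?f1_0 // f2_VZ /= w2_0 (br0l br_graded).
Qed.

Lemma tanaka1_Jmap w : tanaka R m q br 1 w ->
  forall z, w.2 z = (- '[e1, e1]_Z^-1 *: (w.2 e1 *m J e1)) *m J z.
Proof.
move: w => [w1 w2] [_ w2_lin w1_in _ [_ w_VZ _]].
apply: (center_action_Jmap (B := fun x => (w1 x).1)) => //.
- by move=> x; have [] := w1_in x.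
- move=> x y y'; have [_ _ _ _ [wx_VV _ _]] := w1_in x.
  have /= <- := w_VZ x (br y y').
  by rewrite wx_VV /= /lopp /lscale /ladd /= scaleN1r.
Qed.

Lemma tanaka2_eq0 u : tanaka R m q br 2 u -> (forall z, u.2 z = lzero R m q 2) ->
  u = lzero R m q 4.
Proof.
move: u => [u1 u2] [_ _ u1_in _ [_ u_VZ _]] /= u2_0.
have u1_0 x : u1 x = lzero R m q 3.
  by apply: tanaka1_eq0 (u1_in x) _ => z; rewrite u_VZ /= u2_0.
by congr pair; apply: funext => ?; rewrite ?u1_0 ?u2_0.
Qed.

Lemma tanaka3_vanishes : tanaka_vanishes br 3.
Proof.
move=> [y1 y2] [_ _ y1_in y2_in [_ y_VZ y_ZZ]].
have Psi0 := symmetric_Jmap_family_eq0 (fun a => tanaka1_Jmap (y2_in a)) y_ZZ.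
have y2_0 z : y2 z = lzero R m q 3 by apply: tanaka1_eq0 (y2_in z) _; apply: Psi0.
have y1_0 x : y1 x = lzero R m q 4.
  by apply: tanaka2_eq0 (y1_in x) _ => z; rewrite y_VZ /= y2_0.
by congr pair; apply: funext => ?; rewrite ?y1_0 ?y2_0.
Qed.

End OrthogonalTriple.

End PseudoHType.

Theorem corollary3p7 (R : realType) (m q : nat)
    (br : 'rV[R]_m -> 'rV[R]_m -> 'rV[R]_q) (gV : 'M[R]_m) (gZ : 'M[R]_q) :
  @pseudo_Htype R m q br gV gZ -> (3 <= q)%N -> @rigid R m q br.
Proof.
move=> HH q_ge3.
have [e1 [e2 [e3 [e1_aniso e2_aniso e3_aniso [e12 e13 e23]]]]] :=
  exists_orthogonal_triple HH q_ge3.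
have vanish j : tanaka_vanishes br (j + 3).
  elim: j => [|j IHj]; rewrite ?add0n ?addSn.
    exact/(tanaka3_vanishes HH e1_aniso e2_aniso e3_aniso e12 e13 e23).
  exact/(tanaka_vanishes_succ (pseudo_Htype_graded HH) IHj).
by exists 3%N => k le3k; rewrite -(subnK le3k); apply: vanish.
Qed.
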